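(* Let $X,Y$ be Banach spaces, let $F:X\rightrightarrows Y$ be a closed convex set-valued mapping, let $A\subset X$ be a closed convex set, let $\bar y\in Y$, put $S:=F^{-1}(\bar y)\cap A$, and let $\bar x\in S$. Let $\eta\in(0,+\infty)$ be such that $$DF^{-1}(\bar y,\bar x)(\eta_1B_Y)\cap(T(A,\bar x)+\eta_2B_X)\subset B_X\quad\text{for all }\eta_1,\eta_2\ge0\text{ with }\eta_1+\eta_2<\eta.$$ Then $S=\{\bar x\}$.
   Context: $B_X,B_Y$ are the closed unit balls. $F$ closed convex means ${\rm gph}(F)=\{(x,y):y\in F(x)\}$ is closed and convex in $X\times Y$. For a closed convex set $C$ and $a\in C$, the contingent cone $T(C,a)$ is the set of $v$ for which there exist $v_n\to v$, $t_n\to0^+$ with $a+t_nv_n\in C$ for all $n$. For $(x,y)\in{\rm gph}(F)$, $DF^{-1}(y,x)(v):=\{u\in X:(u,v)\in T({\rm gph}(F),(x,y))\}$ and $DF^{-1}(y,x)(W)=\bigcup_{v\in W}DF^{-1}(y,x)(v)$ for $W\subset Y$. *)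

From HB Require Import structures.
From mathcomp Require Import all_boot all_order all_algebra.
From mathcomp Require Import all_classical all_reals all_analysis.
Set Implicit Arguments. Unset Strict Implicit. Unset Printing Implicit Defensive.
Import Order.TTheory GRing.Theory Num.Theory.
Import numFieldNormedType.Exports.
Local Open Scope classical_set_scope.
Local Open Scope ring_scope.

Definition unit_ball {R : realType} (V : normedModType R) : set V :=
  [set x | `|x| <= 1].
Arguments unit_ball {R} V.

Definition scale_set {R : realType} (V : normedModType R) (r : R) (C : set V) : set V :=
  [set r *: c | c in C].

Definition mink_sum {R : realType} (V : normedModType R) (C D : set V) : set V :=
  [set c + d | c in C & d in D].

Definition convex_set' {R : realType} (V : normedModType R) (C : set V) : Prop :=
  forall a b t, C a -> C b -> 0 <= t <= 1 -> C (t *: a + (1 - t) *: b).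

Definition gph {X Y : Type} (F : X -> set Y) : set (X * Y) :=
  [set p | F p.1 p.2].

Definition closed_convex_map {R : realType} (X Y : normedModType R)
    (F : X -> set Y) : Prop :=
  closed (gph F) /\
  (forall x1 y1 x2 y2 t, F x1 y1 -> F x2 y2 -> 0 <= t <= 1 ->
     F (t *: x1 + (1 - t) *: x2) (t *: y1 + (1 - t) *: y2)).

Definition contingent_cone {R : realType} (V : normedModType R) (C : set V) (a : V)
    : set V :=
  [set v | exists (vn : nat -> V) (tn : nat -> R),
     vn @ \oo --> v /\ tn @ \oo --> 0 /\ (forall n, 0 < tn n) /\
     (forall n, C (a + tn n *: vn n))].

(* contingent cone of gph F at (x, y), with convergence in X x Y written
   componentwise *)
Definition gph_contingent {R : realType} (X Y : normedModType R)
    (F : X -> set Y) (x : X) (y : Y) : set (X * Y) :=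
  [set w | exists (un : nat -> X) (vn : nat -> Y) (tn : nat -> R),
     un @ \oo --> w.1 /\ vn @ \oo --> w.2 /\ tn @ \oo --> 0 /\
     (forall n, 0 < tn n) /\
     (forall n, F (x + tn n *: un n) (y + tn n *: vn n))].

Definition DFinv {R : realType} (X Y : normedModType R)
    (F : X -> set Y) (y : Y) (x : X) (v : Y) : set X :=
  [set u | gph_contingent F x y (u, v)].

Definition DFinv_set {R : realType} (X Y : normedModType R)
    (F : X -> set Y) (y : Y) (x : X) (W : set Y) : set X :=
  [set u | exists2 v, W v & DFinv F y x v u].

From HB Require Import structures.
From mathcomp Require Import all_boot all_order all_algebra.
From mathcomp Require Import all_classical all_reals all_analysis.
From mathcomp Require Import lra.
Import Order.TTheory GRing.Theory Num.Theory.
Import numFieldNormedType.Exports.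
Local Open Scope classical_set_scope.
Local Open Scope ring_scope.

(* If x <> xbar lay in S, convexity of A and of gph F would put the whole
   segment [xbar, x] into A and into F^{-1}(ybar), so every positive multiple
   of x - xbar lies in DF^{-1}(ybar, xbar)(0) /\ T(A, xbar).  Already the case
   eta1 = eta2 = 0 of the hypothesis bounds these multiples by 1, which is
   absurd for a multiple of norm 2. *)

Lemma harmonic_le1 (R : numFieldType) (n : nat) : (harmonic n : R) <= 1.
Proof. by rewrite /= invf_le1 ?ltr0n // ler1n. Qed.

Lemma addr_scaleB (R : pzRingType) (V : lmodType R) (a b : V) (t : R) :
  a + t *: (b - a) = t *: b + (1 - t) *: a.
Proof. by rewrite scalerBr scalerBl scale1r addrCA. Qed.

Section ContingentCone.
Variables (R : realType) (V : normedModType R) (C : set V) (a : V).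

Lemma contingent_coneZ (c : R) (v : V) :
  0 < c -> contingent_cone C a v -> contingent_cone C a (c *: v).
Proof.
move=> c_gt0 [vn [tn [vn_v [tn_0 [tn_gt0 Cn]]]]].
exists (fun n => c *: vn n), (fun n => tn n / c); split; first exact: cvgZl_tmp.
split; first by rewrite -(mul0r c^-1); exact: cvgMr_tmp.
split=> [n|n]; first by rewrite divr_gt0.
by rewrite scalerA divfK ?gt_eqF.
Qed.

Lemma convex_contingent_cone_sub (x : V) :
  convex_set' C -> C a -> C x -> contingent_cone C a (x - a).
Proof.
move=> Cconv Ca Cx; exists (fun=> x - a), harmonic; split; first exact: cvg_cst.
split; first exact: cvg_harmonic.
split=> [n|n]; first exact: harmonic_gt0.
by rewrite addr_scaleB; apply: Cconv; rewrite ?harmonic_ge0 ?harmonic_le1.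
Qed.

End ContingentCone.

Section GraphContingentCone.
Variables (R : realType) (X Y : normedModType R) (F : X -> set Y) (x : X) (y : Y).

Lemma gph_contingentZ (c : R) (u : X) (v : Y) :
  0 < c -> gph_contingent F x y (u, v) -> gph_contingent F x y (c *: u, c *: v).
Proof.
move=> c_gt0 [un [vn [tn [un_u [vn_v [tn_0 [tn_gt0 Fn]]]]]]].
exists (fun n => c *: un n), (fun n => c *: vn n), (fun n => tn n / c).
split; first exact: cvgZl_tmp.
split; first exact: cvgZl_tmp.
split; first by rewrite -(mul0r c^-1); exact: cvgMr_tmp.
split=> [n|n]; first by rewrite divr_gt0.
by rewrite !scalerA divfK ?gt_eqF.
Qed.

Hypothesis Fconvex : forall x1 y1 x2 y2 t, F x1 y1 -> F x2 y2 -> 0 <= t <= 1 ->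
  F (t *: x1 + (1 - t) *: x2) (t *: y1 + (1 - t) *: y2).

Lemma convex_gph_contingent_sub (x' : X) (y' : Y) :
  F x y -> F x' y' -> gph_contingent F x y (x' - x, y' - y).
Proof.
move=> Fxy Fxy'; exists (fun=> x' - x), (fun=> y' - y), harmonic.
split; first exact: cvg_cst.
split; first exact: cvg_cst.
split; first exact: cvg_harmonic.
split=> [n|n]; first exact: harmonic_gt0.
by rewrite !addr_scaleB; apply: Fconvex; rewrite ?harmonic_ge0 ?harmonic_le1.
Qed.

End GraphContingentCone.

Lemma scale_set_unit_ball0 (R : realType) (V : normedModType R) (r : R) :
  scale_set r (unit_ball V) 0.
Proof. by exists 0; rewrite ?scaler0 // /unit_ball /= normr0. Qed.

Lemma mink_sum_scale_ball_sup (R : realType) (V : normedModType R) (C : set V)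
    (r : R) :
  C `<=` mink_sum C (scale_set r (unit_ball V)).
Proof.
by move=> v Cv; exists v => //; exists 0; [exact: scale_set_unit_ball0 | rewrite addr0].
Qed.

Theorem proposition3p1 (R : realType) (X Y : completeNormedModType R)
    (F : X -> set Y) (A : set X) (ybar : Y) (xbar : X) (eta : R) :
  closed_convex_map F ->
  closed A -> convex_set' A ->
  F xbar ybar -> A xbar ->
  0 < eta ->
  (forall eta1 eta2 : R, 0 <= eta1 -> 0 <= eta2 -> eta1 + eta2 < eta ->
     DFinv_set F ybar xbar (scale_set eta1 (unit_ball Y))
       `&` mink_sum (contingent_cone A xbar) (scale_set eta2 (unit_ball X))
     `<=` unit_ball X) ->
  [set x | F x ybar /\ A x] = [set xbar].
Proof.
move=> [_ Fconvex] _ Aconvex Fxbar Axbar eta_gt0 bounded.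
apply/seteqP; split=> [x [Fx Ax]|x ->] //=.
have [//|x_neq] := eqVneq x xbar; exfalso.
have d_gt0 : 0 < `|x - xbar| by rewrite normr_gt0 subr_eq0.
pose c := 2 / `|x - xbar|.
have c_gt0 : 0 < c by rewrite divr_gt0.
have : unit_ball X (c *: (x - xbar)).
  apply: (bounded 0 0) => //; rewrite ?addr0 //; split.
  - exists 0; first exact: scale_set_unit_ball0.
    rewrite /DFinv -(scaler0 _ c) -(subrr ybar).
    exact/gph_contingentZ/convex_gph_contingent_sub.
  - exact/mink_sum_scale_ball_sup/contingent_coneZ/convex_contingent_cone_sub.
rewrite /unit_ball /= normrZ gtr0_norm // divfK ?gt_eqF //; lra.
Qed.
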